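(* Let $(X,\mathcal E_X)$ be a ballean. If $\operatorname{cof}_\star(\mathcal E_X)\le\operatorname{add}(\mathcal B_X)$, then $X$ is normal.
   Context: A ballean is a pair $(X,\mathcal E_X)$ where $X$ is a set and $\mathcal E_X$ is a family of subsets of $X\times X$ (called entourages) such that: each $E\in\mathcal E_X$ contains the diagonal $\Delta_X=\{(x,x):x\in X\}$; for any $E,F\in\mathcal E_X$ there is $D\in\mathcal E_X$ with $E\circ F^{-1}\subset D$, where $E\circ F=\{(x,z):\exists y\ (x,y)\in E,\ (y,z)\in F\}$ and $F^{-1}=\{(y,x):(x,y)\in F\}$; and $\bigcup\mathcal E_X=X\times X$. For $E\in\mathcal E_X$, $x\in X$, $A\subset X$ put $E[x]=\{y:(x,y)\in E\}$ and $E[A]=\bigcup_{a\in A}E[a]$. A set $B\subset X$ is bounded if $B\subset E[x]$ for some $E\in\mathcal E_X$, $x\in X$; $\mathcal B_X$ denotes the family of bounded sets (the bornology). Sets $A,B\subset X$ are asymptotically disjoint if $E[A]\cap E[B]\in\mathcal B_X$ for all $E\in\mathcal E_X$; $U\subset X$ is an asymptotic neighborhood of $A$ if $E[A]\setminus U\in\mathcal B_X$ for all $E\in\mathcal E_X$. $X$ is normal if any two asymptotically disjoint sets have disjoint asymptotic neighborhoods. For a partially ordered set $P$: $\operatorname{add}(P)$ is the smallest cardinality of a subset of $P$ having no upper bound in $P$, and $\operatorname{cof}(P)$ is the smallest cardinality of a cofinal subset of $P$; if $P$ has a largest element, put $\operatorname{add}(P)=\operatorname{cof}(P)=1$. $\mathcal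 B_X$ is ordered by inclusion. For $A\subset X$, $\operatorname{cof}_*(\mathcal E_X[A])$ is the smallest cardinality of a subfamily $\mathcal C\subset\mathcal E_X$ such that for every $E\in\mathcal E_X$ there is $C\in\mathcal C$ with $E[A]\setminus C[A]\in\mathcal B_X$; and $\operatorname{cof}_\star(\mathcal E_X)=\sup_{A\subset X}\operatorname{cof}_*(\mathcal E_X[A])$. *)

(* balleans on an arbitrary type X; subsets are predicates,
   entourages are binary relations X -> X -> Prop. Cardinal comparisons
   are expressed via injections between index types. *)

Definition rel (X : Type) := X -> X -> Prop.
Definition subset (X : Type) := X -> Prop.

Definition rcomp {X : Type} (e f : rel X) : rel X :=
  fun x z => exists y, e x y /\ f y z.
Definition rinv {X : Type} (f : rel X) : rel X := fun y x => f x y.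

Definition is_ballean (X : Type) (E : rel X -> Prop) : Prop :=
  (forall e, E e -> forall x, e x x) /\
  (forall e f, E e -> E f ->
     exists d, E d /\ forall x z, rcomp e (rinv f) x z -> d x z) /\
  (forall x y, exists e, E e /\ e x y).

Definition ballset {X : Type} (e : rel X) (A : subset X) : subset X :=
  fun y => exists a, A a /\ e a y.

Definition bounded {X : Type} (E : rel X -> Prop) (B : subset X) : Prop :=
  exists e x, E e /\ forall y, B y -> e x y.

Definition asymp_disjoint {X : Type} (E : rel X -> Prop) (A B : subset X) : Prop :=
  forall e, E e -> bounded E (fun y => ballset e A y /\ ballset e B y).

Definition asymp_nbhd {X : Type} (E : rel X -> Prop) (U A : subset X) : Prop :=
  forall e, E e -> bounded E (fun y => ballset e A y /\ ~ U y).

Definition normal_ballean {X : Type} (E : rel X -> Prop) : Prop :=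
  forall A B : subset X, asymp_disjoint E A B ->
    exists U V : subset X, asymp_nbhd E U A /\ asymp_nbhd E V B /\
      (forall x, U x -> V x -> False).

Definition card_le (I J : Type) : Prop :=
  exists f : I -> J, forall i i', f i = f i' -> i = i'.

Definition bornology_has_largest {X : Type} (E : rel X -> Prop) : Prop :=
  exists L, bounded E L /\ forall B, bounded E B -> forall y, B y -> L y.

Definition has_upper_bound {X : Type} (E : rel X -> Prop) {J : Type}
  (D : J -> subset X) : Prop :=
  exists U, bounded E U /\ forall j y, D j y -> U y.

(* |I| <= add(B_X): add(B_X) = 1 if B_X has a largest element, and otherwise
   the least cardinality of a subfamily of B_X without upper bound in B_X. *)
Definition card_le_add {X : Type} (E : rel X -> Prop) (I : Type) : Prop :=
  (bornology_has_largest E -> card_le I unit) /\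
  (~ bornology_has_largest E ->
     forall (J : Type) (D : J -> subset X),
       (forall j, bounded E (D j)) -> ~ has_upper_bound E D -> card_le I J).

(* C (indexed by I) witnesses cof_*(E_X[A]) <= |I|. *)
Definition cof_star_family {X : Type} (E : rel X -> Prop) (A : subset X)
  {I : Type} (C : I -> rel X) : Prop :=
  (forall i, E (C i)) /\
  (forall e, E e -> exists i,
     bounded E (fun y => ballset e A y /\ ~ ballset (C i) A y)).

(* cof_star(E_X) = sup_A cof_*(E_X[A]) <= add(B_X) *)
Definition cof_star_le_add {X : Type} (E : rel X -> Prop) : Prop :=
  forall A : subset X,
    exists (I : Type) (C : I -> rel X), cof_star_family E A C /\ card_le_add E I.

(* Let S = A ∪ B and let (C_i)_{i ∈ I} witness cof_*(E_X[S]) ≤ add(B_X).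
   Order I so that every initial segment is smaller than I.  For b ≤ a the
   sets C_a[A] ∩ C_b[B] and C_b[A] ∩ C_a[B] are bounded by asymptotic
   disjointness, and as fewer than add(B_X) indices lie below a, a single
   bounded set D_a contains all of them.  The sets U = ⋃_a C_a[A] \ D_a and
   V = ⋃_a C_a[B] \ D_a are then disjoint (compare the two indices), and
   since some C_i[S] covers E[S] up to a bounded set they are asymptotic
   neighbourhoods of A and B. *)

From mathcomp Require Import ssreflect ssrbool eqtype.
From mathcomp Require Import boolp wochoice.

Definition trichotomous {I : Type} (lt : I -> I -> Prop) : Prop :=
  forall a b, a = b \/ lt a b \/ lt b a.

Lemma card_le_sigP (I J : Type) (P : J -> Prop) :
  card_le I {j | P j} <->
  exists g : I -> J, (forall i i', g i = g i' -> i = i') /\ forall i, P (g i).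
Proof.
split=> [[f f_inj]|[g [g_inj Pg]]].
- exists (fun i => proj1_sig (f i)); split=> [i i' eq_fi|i]; last exact: proj2_sig.
  apply: f_inj; move: eq_fi; case: (f i) (f i') => [x px] [y py] /= exy.
  by subst y; congr exist; apply: Prop_irrelevance.
- exists (fun i => exist P (g i) (Pg i)) => i i' /(f_equal (@proj1_sig _ _)).
  exact: g_inj.
Qed.

Lemma exists_strict_well_order (I : Type) : exists lt : I -> I -> Prop,
  trichotomous lt /\
  forall P : I -> Prop, (exists a, P a) ->
    exists a, P a /\ forall b, lt b a -> ~ P b.
Proof.
have [R R_wo] := well_ordering_principle {classic I}.
have R_chain : wo_chain R predT by move=> A _; apply: R_wo.
have R_total a b : R a b \/ R b a.
  by case/orP: (wo_chainW R_chain (isT : a \in predT) (isT : b \in predT)); tauto.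
have R_anti a b : R a b -> R b a -> a = b.
  by move=> Rab Rba; apply: (wo_chain_antisymmetric R_chain) => //; rewrite Rab Rba.
exists (fun a b => R a b /\ a <> b); split.
- move=> a b; case: (EM (a = b)) => [->|neq_ab]; first by left.
  right; case: (R_total a b) => [Rab|Rba]; [left|right]; split=> // eq_ba.
  exact: neq_ab.
- move=> P [a Pa]; have [|z [[Pz z_min] _]] := R_wo [pred x | `[< P x >]].
    by exists a; apply/asboolP.
  exists z; split=> [|b [Rbz neq_bz] Pb]; first exact/asboolP.
  by apply: neq_bz; apply: R_anti Rbz (z_min b _); apply/asboolP.
Qed.

(* Pull the order back along an injection of I into the least initial
   segment that receives one: the segments of the new order inject into
   strictly smaller segments, which receive no injection by minimality. *)
Lemma exists_order_small_segments (I : Type) : exists lt : I -> I -> Prop,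
  trichotomous lt /\ forall a, ~ card_le I {b | lt b a}.
Proof.
have [lt [lt_tri lt_least]] := exists_strict_well_order I.
case: (EM (exists a, card_le I {b | lt b a})) => [big|small]; last first.
  by exists lt; split=> // a ?; apply: small; exists a.
have [a0 [/card_le_sigP [g [g_inj g_lt]] a0_min]] := lt_least _ big.
exists (fun i j => lt (g i) (g j)); split.
- by move=> i j; case: (lt_tri (g i) (g j)) => [/g_inj|]; tauto.
- move=> i /card_le_sigP [h [h_inj h_lt]]; apply: (a0_min (g i) (g_lt i)).
  apply/card_le_sigP; exists (fun j => g (h j)).
  by split=> [j j' /g_inj /h_inj|j] //; apply: h_lt.
Qed.

Section Ballean.

Context {X : Type} {E : rel X -> Prop} (E_ballean : is_ballean X E).
Implicit Types (e f : rel X) (A B : subset X).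

Lemma ballset_mono {e f A} :
  (forall x y, e x y -> f x y) -> forall y, ballset e A y -> ballset f A y.
Proof. by move=> ef y [a [Aa eay]]; exists a; split; last apply: ef. Qed.

Lemma ballsetU e A B y :
  ballset e (fun x => A x \/ B x) y <-> ballset e A y \/ ballset e B y.
Proof.
split=> [[a [[Aa|Ba] eay]]|[[a [Aa eay]]|[a [Ba eay]]]].
- by left; exists a.
- by right; exists a.
- by exists a; split; first left.
- by exists a; split; first right.
Qed.

Lemma entourage_comp {e f} : E e -> E f ->
  exists d, E d /\ forall x y z, e x y -> f y z -> d x z.
Proof.
case: E_ballean => [E_refl [E_comp _]] Ee Ef.
have [g [Eg f_g]] := E_comp f f Ef Ef.
have [d [Ed eg_d]] := E_comp e g Ee Eg.
exists d; split=> // x y z exy fyz; apply: eg_d; exists y; split=> //.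
by apply: f_g; exists z; split=> //; apply: E_refl.
Qed.

Lemma entourage_join {e f} : E e -> E f ->
  exists d, E d /\ (forall x y, e x y -> d x y) /\ (forall x y, f x y -> d x y).
Proof.
case: E_ballean => [E_refl _] Ee Ef.
have [d [Ed ef_d]] := entourage_comp Ee Ef.
by exists d; split=> //; split=> x y; [move/ef_d; apply | apply: ef_d]; apply: E_refl.
Qed.

Lemma bounded_sub {B1 B2} :
  bounded E B2 -> (forall y, B1 y -> B2 y) -> bounded E B1.
Proof. by move=> [e [x [Ee B2_ball]]] B12; exists e, x; split=> // y /B12 /B2_ball. Qed.

Lemma bounded_union {B1 B2} :
  bounded E B1 -> bounded E B2 -> bounded E (fun y => B1 y \/ B2 y).
Proof.
case: E_ballean => [_ [_ E_cover]] [e1 [x1 [Ee1 B1_ball]]] [e2 [x2 [Ee2 B2_ball]]].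
have [f [Ef fx12]] := E_cover x1 x2.
have [c [Ec fe2_c]] := entourage_comp Ef Ee2.
have [d [Ed [e1_d c_d]]] := entourage_join Ee1 Ec.
exists d, x1; split=> // y [/B1_ball/e1_d|/B2_ball x2y] //.
by apply/c_d/(fe2_c _ x2).
Qed.

Lemma asymp_disjoint_sym {A B} : asymp_disjoint E A B -> asymp_disjoint E B A.
Proof. by move=> AB e Ee; apply: bounded_sub (AB e Ee) _ => y []. Qed.

Lemma asymp_disjoint_balls {A B e f} : asymp_disjoint E A B -> E e -> E f ->
  bounded E (fun y => ballset e A y /\ ballset f B y).
Proof.
move=> AB Ee Ef; have [d [Ed [e_d f_d]]] := entourage_join Ee Ef.
apply: bounded_sub (AB d Ed) _ => y [eAy fBy].
by split; [apply: (ballset_mono e_d) | apply: (ballset_mono f_d)].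
Qed.

Lemma has_upper_bound_small (I J : Type) (D : J -> subset X) :
  card_le_add E I -> (forall j, bounded E (D j)) -> ~ card_le I J ->
  has_upper_bound E D.
Proof.
move=> [_ add_small] D_bd not_IJ.
case: (EM (bornology_has_largest E)) => [[L [L_bd L_max]]|no_largest].
- by exists L; split=> // j y; apply: L_max.
- by case: (EM (has_upper_bound E D)) => // no_ub; case: not_IJ; apply: add_small.
Qed.

Context {I : Type} (C : I -> rel X).

Definition cross_ball A B (a b : I) : subset X := fun y =>
  (ballset (C a) A y /\ ballset (C b) B y) \/ (ballset (C b) A y /\ ballset (C a) B y).

Definition sep_nbhd (D : I -> subset X) A : subset X :=
  fun y => exists i, ballset (C i) A y /\ ~ D i y.

Lemma cross_ball_bounded A B : (forall i, E (C i)) ->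
  asymp_disjoint E A B -> forall a b, bounded E (cross_ball A B a b).
Proof.
move=> EC AB a b; exact: bounded_union
  (asymp_disjoint_balls AB (EC a) (EC b)) (asymp_disjoint_balls AB (EC b) (EC a)).
Qed.

Lemma exists_segment_bounds (lt : I -> I -> Prop) (P : I -> I -> subset X) :
  card_le_add E I -> (forall a, ~ card_le I {b | lt b a}) ->
  (forall a b, bounded E (P a b)) ->
  exists D : I -> subset X, (forall a, bounded E (D a)) /\
    forall a b, lt b a \/ b = a -> forall y, P a b y -> D a y.
Proof.
move=> I_add lt_small P_bd.
have D_ex a : exists Da, bounded E Da /\
    forall b, lt b a \/ b = a -> forall y, P a b y -> Da y.
  have [G [G_bd G_ub]] := has_upper_bound_small _ _
    (fun b : {b | lt b a} => P a (proj1_sig b)) I_add (fun b => P_bd _ _) (lt_small a).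
  exists (fun y => G y \/ P a a y); split; first exact: bounded_union.
  by move=> b [lt_ba|<-] y Pby; [left; apply: (G_ub (exist _ b lt_ba))|right].
by have [D D_spec] := choice D_ex; exists D; split=> a; case: (D_spec a).
Qed.

Lemma sep_nbhd_asymp_nbhd (D : I -> subset X) A B :
  asymp_disjoint E A B -> cof_star_family E (fun y => A y \/ B y) C ->
  (forall i, bounded E (D i)) -> asymp_nbhd E (sep_nbhd D A) A.
Proof.
move=> AB [EC C_cof] D_bd e Ee.
have [i Ci_approx] := C_cof e Ee.
have [d [Ed [e_d C_d]]] := entourage_join Ee (EC i).
apply: bounded_sub (bounded_union (bounded_union Ci_approx (AB d Ed)) (D_bd i)) _.
move=> y [eAy not_sep]; case: (EM (D i y)) => [|not_Di]; [by right | left].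
have not_CiA : ~ ballset (C i) A y by move=> CiAy; apply: not_sep; exists i.
case: (EM (ballset (C i) B y)) => [CiBy|not_CiB].
- by right; split; [apply: (ballset_mono e_d) | apply: (ballset_mono C_d)].
- by left; split; [apply/ballsetU; left | move/ballsetU; case].
Qed.

Lemma sep_nbhd_disjoint (lt : I -> I -> Prop) (D : I -> subset X) A B :
  trichotomous lt ->
  (forall a b, lt b a \/ b = a -> forall y, cross_ball A B a b y -> D a y) ->
  forall y, sep_nbhd D A y -> sep_nbhd D B y -> False.
Proof.
move=> lt_tri D_cover y [a [CaAy not_Da]] [b [CbBy not_Db]].
case: (lt_tri a b) => [eq_ab|[lt_ab|lt_ba]].
- by apply: not_Da; apply: (D_cover a b); [right|left].
- by apply: not_Db; apply: (D_cover b a); [left|right].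
- by apply: not_Da; apply: (D_cover a b); [left|left].
Qed.

End Ballean.

Theorem theorem1p2 (X : Type) (E : rel X -> Prop) :
  is_ballean X E -> cof_star_le_add E -> normal_ballean E.
Proof.
move=> E_ballean E_cof A B AB.
have [I [C [C_cof I_add]]] := E_cof (fun y => A y \/ B y).
have [lt [lt_tri lt_small]] := exists_order_small_segments I.
have [D [D_bd D_cover]] := exists_segment_bounds E_ballean lt (cross_ball C A B)
  I_add lt_small (cross_ball_bounded E_ballean C A B (proj1 C_cof) AB).
exists (sep_nbhd C D A), (sep_nbhd C D B); split; [|split].
- exact (sep_nbhd_asymp_nbhd E_ballean C D A B AB C_cof D_bd).
- have BA_cof : cof_star_family E (fun y => B y \/ A y) C.
    suff -> : (fun y => B y \/ A y) = (fun y => A y \/ B y) by [].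
    by apply: funext => y; apply: propext; tauto.
  exact (sep_nbhd_asymp_nbhd E_ballean C D B A (asymp_disjoint_sym AB) BA_cof D_bd).
- exact (sep_nbhd_disjoint C lt D A B lt_tri D_cover).
Qed.
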